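(* Let $X$ be a path-connected finite down-wide poset and let $f\colon X\to\mathbb R$ be an injective Morse function satisfying the Exclusion condition. Let $a<b$ and suppose the interval $(a,b]$ contains no critical values of $f$ and contains exactly one regular value $e=f(y)$. Then there exists $z\in X_a$ with $z\prec y$ or $y\prec z$.
   Context: A finite poset is regarded as a finite $T_0$-space whose open sets are down-sets; $U_x=\{y: y\le x\}$. Write $a\prec b$ if $a<b$ and there is no $c$ with $a<c<b$. $X$ is down-wide if $\#\{y:y\prec x\}\ge2$ for every non-minimal $x$. A Morse function on $X$ is a map $f\colon X\to\mathbb R$ such that for every $x$, $\#\{y: x\prec y,\ f(x)\ge f(y)\}\le1$ and $\#\{w: w\prec x,\ f(w)\ge f(x)\}\le 1$; $x$ is critical if both sets are empty, regular otherwise; critical (regular) values are images of critical (regular) points. $f$ satisfies the Exclusion condition if for every regular $x$ exactly one of the two sets is nonempty. For $t\in\mathbb R$, $X_t=\bigcup_{f(x)\le t}U_x$. *)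

From mathcomp Require Import all_boot.
From Stdlib Require Import Reals.

Set Implicit Arguments.
Unset Strict Implicit.
Unset Printing Implicit Defensive.

Definition is_poset (X : finType) (le : X -> X -> Prop) : Prop :=
  (forall x, le x x) /\
  (forall x y, le x y -> le y x -> x = y) /\
  (forall x y z, le x y -> le y z -> le x z).

Definition plt (X : finType) (le : X -> X -> Prop) (x y : X) : Prop :=
  le x y /\ x <> y.

Definition covers (X : finType) (le : X -> X -> Prop) (a b : X) : Prop :=
  plt le a b /\ ~ (exists c, plt le a c /\ plt le c b).

Definition down_wide (X : finType) (le : X -> X -> Prop) : Prop :=
  forall x, (exists y, plt le y x) ->
    exists y1 y2, y1 <> y2 /\ covers le y1 x /\ covers le y2 x.

(* Topology: open sets are down-sets. *)
Definition down_set (X : finType) (le : X -> X -> Prop) (U : X -> Prop) : Prop :=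
  forall x y, le y x -> U x -> U y.

Definition open_in_unit (S : R -> Prop) : Prop :=
  forall t, (0 <= t <= 1)%R -> S t ->
    exists eps, (0 < eps)%R /\
      forall s, (0 <= s <= 1)%R -> (Rabs (s - t) < eps)%R -> S s.

(* continuous path [0,1] -> X (values outside [0,1] irrelevant) *)
Definition cont_path (X : finType) (le : X -> X -> Prop) (g : R -> X) : Prop :=
  forall U, down_set le U -> open_in_unit (fun t => U (g t)).

Definition path_connected (X : finType) (le : X -> X -> Prop) : Prop :=
  forall x y : X, exists g : R -> X, cont_path le g /\ g 0%R = x /\ g 1%R = y.

Definition up_bad (X : finType) (le : X -> X -> Prop) (f : X -> R) (x y : X) : Prop :=
  covers le x y /\ (f y <= f x)%R.
Definition down_bad (X : finType) (le : X -> X -> Prop) (f : X -> R) (x w : X) : Prop :=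
  covers le w x /\ (f w >= f x)%R.

Definition at_most_one (X : Type) (P : X -> Prop) : Prop :=
  forall a b, P a -> P b -> a = b.

Definition morse (X : finType) (le : X -> X -> Prop) (f : X -> R) : Prop :=
  forall x, at_most_one (up_bad le f x) /\ at_most_one (down_bad le f x).

Definition critical (X : finType) (le : X -> X -> Prop) (f : X -> R) (x : X) : Prop :=
  (~ exists y, up_bad le f x y) /\ (~ exists w, down_bad le f x w).

Definition regular (X : finType) (le : X -> X -> Prop) (f : X -> R) (x : X) : Prop :=
  ~ critical le f x.

Definition exclusion (X : finType) (le : X -> X -> Prop) (f : X -> R) : Prop :=
  forall x, regular le f x ->
    ((exists y, up_bad le f x y) /\ ~ (exists w, down_bad le f x w)) \/
    (~ (exists y, up_bad le f x y) /\ (exists w, down_bad le f x w)).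

(* X_t = union of U_x over f x <= t *)
Definition sublevel (X : finType) (le : X -> X -> Prop) (f : X -> R) (t : R) (z : X) : Prop :=
  exists x, (f x <= t)%R /\ le z x.

From mathcomp Require Import all_boot.
From Stdlib Require Import Reals Lra Classical.

Set Implicit Arguments.

(* A regular point y has an up-bad upper cover or a down-bad lower cover.
   An up-bad upper cover y' already has f y' < f y by injectivity.  Otherwise
   down-wideness gives two lower covers of y, and the Morse condition lets at
   most one of them be down-bad, so the other lies strictly below f y.  Since
   f y is the only value of f in (a, b], every point with value below f y has
   value at most a, hence lies in X_a. *)

Section MorseCovers.

Variables (X : finType) (le : X -> X -> Prop) (f : X -> R).

Lemma regular_has_bad_cover (x : X) :
  regular le f x -> (exists y, up_bad le f x y) \/ (exists w, down_bad le f x w).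
Proof.
  intros Hreg.
  apply NNPP; intros Hnone.
  apply Hreg; split; intros Hex; apply Hnone; [left | right]; exact Hex.
Qed.

Lemma up_bad_lt (x y : X) :
  injective f -> up_bad le f x y -> (f y < f x)%R.
Proof.
  intros Hinj [[[_ Hne] _] Hle].
  destruct (Rle_lt_or_eq_dec _ _ Hle) as [Hlt | Heq]; [exact Hlt |].
  exfalso; apply Hne; symmetry; exact (Hinj _ _ Heq).
Qed.

Lemma lower_cover_below (x w : X) :
  down_wide le -> morse le f -> down_bad le f x w ->
  exists z, covers le z x /\ (f z < f x)%R.
Proof.
  intros Hdw Hmorse [[Hwx _] _].
  destruct (Hdw x (ex_intro _ w Hwx)) as [z1 [z2 [Hne [C1 C2]]]].
  destruct (Rlt_or_le (f z1) (f x)) as [L1 | G1];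
    [exists z1; split; assumption |].
  destruct (Rlt_or_le (f z2) (f x)) as [L2 | G2];
    [exists z2; split; assumption |].
  exfalso; apply Hne.
  apply (proj2 (Hmorse x)); split; auto with real.
Qed.

Lemma below_unique_regular_value_sublevel (a b : R) (y u : X) :
  (forall x, le x x) ->
  (forall x, critical le f x -> ~ ((a < f x)%R /\ (f x <= b)%R)) ->
  (f y <= b)%R ->
  (forall x, regular le f x -> (a < f x)%R -> (f x <= b)%R -> f x = f y) ->
  (f u < f y)%R -> sublevel le f a u.
Proof.
  intros Hrefl Hcrit Hyb Huniq Hu.
  exists u; split; [| apply Hrefl].
  destruct (Rle_or_lt (f u) a) as [Hle | Hlt]; [exact Hle | exfalso].
  destruct (classic (critical le f u)) as [Hc | Hr].
  - apply (Hcrit u Hc); split; lra.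
  - pose proof (Huniq u Hr Hlt ltac:(lra)); lra.
Qed.

End MorseCovers.

Theorem mainTheorem9 (X : finType) (le : X -> X -> Prop) (f : X -> R)
  (a b : R) (y : X) :
  is_poset le ->
  path_connected le ->
  down_wide le ->
  injective f ->
  morse le f ->
  exclusion le f ->
  (a < b)%R ->
  (* no critical values in (a,b] *)
  (forall x, critical le f x -> ~ ((a < f x)%R /\ (f x <= b)%R)) ->
  (* exactly one regular value in (a,b], namely e = f y *)
  regular le f y -> (a < f y)%R -> (f y <= b)%R ->
  (forall x, regular le f x -> (a < f x)%R -> (f x <= b)%R -> f x = f y) ->
  exists z, sublevel le f a z /\ (covers le z y \/ covers le y z).
Proof.
  intros [Hrefl _] _ Hdw Hinj Hmorse _ _ Hcrit Hreg _ Hyb Huniq.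
  assert (Hbelow : forall u, (f u < f y)%R -> sublevel le f a u)
    by (intros u; apply (below_unique_regular_value_sublevel (b := b)); assumption).
  destruct (regular_has_bad_cover Hreg) as [[y' Hup] | [w Hdown]].
  - exists y'; split.
    + exact (Hbelow y' (up_bad_lt Hinj Hup)).
    + right; exact (proj1 Hup).
  - destruct (lower_cover_below Hdw Hmorse Hdown) as [z [Hz Hfz]].
    exists z; split; [exact (Hbelow z Hfz) | left; exact Hz].
Qed.
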